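(* Let $\Gamma$ be a set of $\tau$PDL formulas satisfied by a state $w$ of an $\mathcal L$-model $M$, let $\neg\mathsf C_\imath A\in\Gamma$ with $A\in\tilde\Sigma$ (i.e. $A$ is an atomic program or of the form $\varphi\Rightarrow\psi$), and let $\{\mathsf C_\imath(\varphi_1\Rightarrow\psi_1),\dots,\mathsf C_\imath(\varphi_k\Rightarrow\psi_k)\}$, $k\ge0$, be the set of all non-negated capability statements for the agent $\imath$ in $\Gamma$ whose program is a precondition-effect term. Then the set $\Delta=\{\varphi_1,\dots,\varphi_k,\ \neg\forall A.\forall(\neg\psi_1).\cdots\forall(\neg\psi_k).\mathsf{ff}\}$ is satisfiable (for $k=0$, $\Delta=\{\neg\forall A.\mathsf{ff}\}$).
   Context: Fix atomic formulas $\mathrm{AtF}$, atomic programs $\mathrm{AtP}$ and agents $I$. $\tau$PDL formulas $\varphi::=p\mid\neg\varphi\mid\forall A.\varphi\mid\mathsf C_\imath A$, programs $A::=a\mid\varphi\mid\varphi\Rightarrow\varphi\mid AA\mid A+A\mid A^*$. $\mathsf{tt}$ is a fixed tautology, $\mathsf{ff}=\neg\mathsf{tt}$. $\Sigma$: programs of the forms $a,\varphi,\varphi\Rightarrow\psi$; $\tilde\Sigma$: programs of the forms $a,\varphi\Rightarrow\psi$; $\Sigma^+$: finite nonempty compositions of elements of $\Sigma$. An $\mathcal L$-model $M$: nonempty set $W$, relations $\to_a$ ($a\in\mathrm{AtP}$), valuation $\rho$, and capability sets $\imath^M(w)\subseteq\bigcup\{\to_C:C\in\Sigma^+\}$. Semantics: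 $[\![p]\!]=\rho(p)$, negation as complement, $[\![\forall A.\varphi]\!]=\{w:\forall w'(w\to_Aw'\Rightarrow w'\models\varphi)\}$; $\to_\varphi=\{(w,w):w\models\varphi\}$, $\to_{AB}=\to_A\circ\to_B$, $\to_{A+B}=\to_A\cup\to_B$, $\to_{A^*}$ reflexive-transitive closure, $\to_{\varphi\Rightarrow\psi}=\bigcup\{\to_C:C\in\Sigma^+,\ \forall w\models\varphi\,\forall w'(w\to_Cw'\Rightarrow w'\models\psi)\}$. Capabilities: $w\models\mathsf C_\imath a$ iff $\to_a\subseteq\imath^M(w)$; $\mathsf C_\imath\varphi$ always true; $w\models\mathsf C_\imath(\varphi\Rightarrow\psi)$ iff $\to_{\varphi\Rightarrow\psi}\subseteq\imath^M(w)$; $w\models\mathsf C_\imath(AB)$ iff $w\models\mathsf C_\imath A$ and every $A$-successor satisfies $\mathsf C_\imath B$; $[\![\mathsf C_\imath(A+B)]\!]=[\![\mathsf C_\imath A]\!]\cap[\![\mathsf C_\imath B]\!]$; $[\![\mathsf C_\imath A^*]\!]=\bigcup\{[\![\varphi]\!]:[\![\varphi]\!]\subseteq[\![\mathsf C_\imath A]\!]\cap[\![\forall A.\varphi]\!]\}$. Normality condition: $\imath^M(w)=\bigcup\{\to_{\varphi\Rightarrow\psi}:w\models\mathsf C_\imath(\varphi\Rightarrow\psi)\}\cup\bigcup\{\to_a:w\models\mathsf C_\imath a\}$. A set of formulas is satisfiable if some state of some $\mathcal L$-model satisfies all its members. *)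

From Stdlib Require Import List Relations.
Import ListNotations.
Set Implicit Arguments.

Section Syntax.
Variables AtF AtP I : Type.

Inductive form : Type :=
| FAt  : AtF -> form
| FNeg : form -> form
| FBox : prog -> form -> form
| FCap : I -> prog -> form
with prog : Type :=
| PAt   : AtP -> prog
| PTest : form -> prog
| PPE   : form -> form -> prog
| PSeq  : prog -> prog -> prog
| PCh   : prog -> prog -> prog
| PStar : prog -> prog.

Definition inSigma (C : prog) : Prop :=
  (exists a, C = PAt a) \/ (exists f, C = PTest f) \/ (exists f g, C = PPE f g).

Definition inTSigma (C : prog) : Prop :=
  (exists a, C = PAt a) \/ (exists f g, C = PPE f g).

Inductive SigmaPlus : prog -> Prop :=
| sp_base : forall C, inSigma C -> SigmaPlus C
| sp_seq  : forall C D, SigmaPlus C -> SigmaPlus D -> SigmaPlus (PSeq C D).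

Definition tt (p : AtF) : form := FBox (PTest (FAt p)) (FAt p).
Definition ff (p : AtF) : form := FNeg (tt p).

End Syntax.

(* The LModel predicate below requires these
   interpretations to satisfy the semantic clauses (the clauses are mutually
   referential/impredicative, so the semantics is given as part of the model). *)
Record struct (AtF AtP I : Type) := {
  W   : Type;
  Ra  : AtP -> W -> W -> Prop;
  rho : AtF -> W -> Prop;
  cap : I -> W -> W -> W -> Prop;
  sat : form AtF AtP I -> W -> Prop;
  rel : prog AtF AtP I -> W -> W -> Prop
}.

Record LModel (AtF AtP I : Type) (M : struct AtF AtP I) : Prop := {
  lm_nonempty : inhabited (W M);
  lm_at   : forall p w, sat M (@FAt AtF AtP I p) w <-> rho M p w;
  lm_neg  : forall f w, sat M (FNeg f) w <-> ~ sat M f w;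
  lm_box  : forall A f w, sat M (FBox A f) w <-> (forall w', rel M A w w' -> sat M f w');
  lm_rat  : forall a u v, rel M (@PAt AtF AtP I a) u v <-> Ra M a u v;
  lm_rtest: forall f u v, rel M (PTest f) u v <-> (u = v /\ sat M f u);
  lm_rseq : forall A B u v, rel M (PSeq A B) u v <-> (exists m, rel M A u m /\ rel M B m v);
  lm_rch  : forall A B u v, rel M (PCh A B) u v <-> (rel M A u v \/ rel M B u v);
  lm_rstar: forall A u v, rel M (PStar A) u v <-> clos_refl_trans _ (rel M A) u v;
  lm_rpe  : forall f g u v, rel M (PPE f g) u v <->
              (exists C, SigmaPlus C /\
                 (forall x, sat M f x -> forall y, rel M C x y -> sat M g y) /\
                 rel M C u v);
  lm_capsub : forall i w u v, cap M i w u v -> exists C, SigmaPlus C /\ rel M C u v;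
  lm_cat  : forall i a w, sat M (FCap i (@PAt AtF AtP I a)) w <->
              (forall u v, Ra M a u v -> cap M i w u v);
  lm_ctest: forall i f w, sat M (FCap i (PTest f)) w <-> True;
  lm_cpe  : forall i f g w, sat M (FCap i (PPE f g)) w <->
              (forall u v, rel M (PPE f g) u v -> cap M i w u v);
  lm_cseq : forall i A B w, sat M (FCap i (PSeq A B)) w <->
              (sat M (FCap i A) w /\ forall w', rel M A w w' -> sat M (FCap i B) w');
  lm_cch  : forall i A B w, sat M (FCap i (PCh A B)) w <->
              (sat M (FCap i A) w /\ sat M (FCap i B) w);
  lm_cstar: forall i A w, sat M (FCap i (PStar A)) w <->
              (exists f, (forall u, sat M f u -> sat M (FCap i A) u /\ sat M (FBox A f) u)
                         /\ sat M f w);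
  lm_normal : forall i w u v, cap M i w u v <->
              ((exists f g, sat M (FCap i (PPE f g)) w /\ rel M (PPE f g) u v) \/
               (exists a, sat M (FCap i (@PAt AtF AtP I a)) w /\ Ra M a u v))
}.

Definition satisfiable (AtF AtP I : Type) (S : form AtF AtP I -> Prop) : Prop :=
  exists (M : struct AtF AtP I), LModel M /\ exists w : W M, forall f, S f -> sat M f w.

Definition chain (AtF AtP I : Type) (p0 : AtF) (l : list (form AtF AtP I * form AtF AtP I))
  : form AtF AtP I :=
  fold_right (fun fg acc => FBox (PTest (FNeg (snd fg))) acc) (ff _ _ p0) l.

Definition Delta (AtF AtP I : Type) (p0 : AtF) (A : prog AtF AtP I)
  (l : list (form AtF AtP I * form AtF AtP I)) (f : form AtF AtP I) : Prop :=
  In f (map fst l) \/ f = FNeg (FBox A (chain p0 l)).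

From Stdlib Require Import List Classical.

(* Since w |= ~C_i A with A an atomic program or a
   precondition-effect term, the capability set of i at w misses some
   A-transition u -> v.  This transition is the witness: Delta holds at u.
   For each C_i(phi_j => psi_j) in Gamma every (phi_j => psi_j)-transition
   lies in the capability set at w, so u -> v is not one.  But if u |= ~phi_j
   then u -> v is a transition of the Sigma^+ program (~phi_j)? A, and if
   v |= psi_j it is one of A psi_j?; both programs witness phi_j => psi_j.
   Hence u |= phi_j and v |= ~psi_j for all j, and since the chain
   forall(~psi_1)....forall(~psi_k).ff fails wherever all psi_j fail, the
   A-successor v of u shows u |= ~forall A. chain. *)

Section LModelFacts.
Context {AtF AtP I : Type} {M : struct AtF AtP I} (HM : LModel M).

Notation form := (form AtF AtP I).
Notation prog := (prog AtF AtP I).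

Lemma sat_ff (p0 : AtF) (x : W M) : ~ sat M (@ff AtF AtP I p0) x.
Proof.
  unfold ff, tt. rewrite (lm_neg HM). intros Hn; apply Hn.
  rewrite (lm_box HM). intros y Hxy.
  rewrite (lm_rtest HM) in Hxy. destruct Hxy as [-> Hy]. exact Hy.
Qed.

(* The chain forall(~psi_1)....forall(~psi_k).ff fails at every state where
   no effect psi_j holds: each test (~psi_j)? then loops back to the state. *)
Lemma chain_false (p0 : AtF) (x : W M) (l : list (form * form)) :
  (forall f g, In (f, g) l -> ~ sat M g x) -> ~ sat M (chain p0 l) x.
Proof.
  induction l as [|[f g] l IH]; simpl; intros Hnone.
  - apply sat_ff.
  - rewrite (lm_box HM). intros Hbox. apply IH.
    + intros f' g' Hin. apply (Hnone f'). right; exact Hin.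
    + apply Hbox. rewrite (lm_rtest HM). split; [reflexivity|].
      rewrite (lm_neg HM). apply (Hnone f). left; reflexivity.
Qed.

Lemma tsigma_sigmaplus (A : prog) : inTSigma A -> SigmaPlus A.
Proof.
  intros [[a ->]|[f [g ->]]]; apply sp_base; unfold inSigma; eauto.
Qed.

Lemma test_sigmaplus (f : form) : SigmaPlus (PTest f).
Proof. apply sp_base. unfold inSigma; eauto. Qed.

(* For A in tilde Sigma, w |= C_i A means that every A-transition belongs to
   the capability set of i at w; so a failing capability has a missing
   A-transition. *)
Lemma missing_transition (i : I) (A : prog) (w : W M) :
  inTSigma A -> ~ sat M (FCap i A) w ->
  exists u v, rel M A u v /\ ~ cap M i w u v.
Proof.
  intros HA Hn. apply NNPP; intros Hall; apply Hn.
  assert (Hin : forall u v, rel M A u v -> cap M i w u v).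
  { intros u v Huv. apply NNPP; intros Hc. apply Hall. exists u, v; auto. }
  destruct HA as [[a ->]|[f [g ->]]].
  - rewrite (lm_cat HM). intros u v Huv. apply Hin. now rewrite (lm_rat HM).
  - rewrite (lm_cpe HM). exact Hin.
Qed.

(* A transition of a Sigma^+ program from a state violating the
   precondition f is a transition of f => g: prefix the test (~f)?,
   which makes the precondition-effect requirement vacuous. *)
Lemma pe_rel_of_precondition_fails (f g : form) (A : prog) (u v : W M) :
  SigmaPlus A -> rel M A u v -> ~ sat M f u -> rel M (PPE f g) u v.
Proof.
  intros HA Huv Hf. rewrite (lm_rpe HM).
  exists (PSeq (PTest (FNeg f)) A). split; [|split].
  - apply sp_seq; [apply test_sigmaplus|exact HA].
  - intros x Hx y Hxy. rewrite (lm_rseq HM) in Hxy.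
    destruct Hxy as [m [Hxm _]]. rewrite (lm_rtest HM), (lm_neg HM) in Hxm.
    destruct Hxm as [_ Hnx]. contradiction.
  - rewrite (lm_rseq HM). exists u. split; [|exact Huv].
    rewrite (lm_rtest HM), (lm_neg HM). auto.
Qed.

(* A transition of a Sigma^+ program into a state satisfying the effect g is
   a transition of f => g: append the test g?, which guarantees the effect. *)
Lemma pe_rel_of_effect_holds (f g : form) (A : prog) (u v : W M) :
  SigmaPlus A -> rel M A u v -> sat M g v -> rel M (PPE f g) u v.
Proof.
  intros HA Huv Hg. rewrite (lm_rpe HM).
  exists (PSeq A (PTest g)). split; [|split].
  - apply sp_seq; [exact HA|apply test_sigmaplus].
  - intros x _ y Hxy. rewrite (lm_rseq HM) in Hxy.
    destruct Hxy as [m [_ Hmy]]. rewrite (lm_rtest HM) in Hmy.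
    destruct Hmy as [-> Hy]. exact Hy.
  - rewrite (lm_rseq HM). exists v. split; [exact Huv|].
    rewrite (lm_rtest HM). auto.
Qed.

(* Key step: if w |= C_i(f => g) and u -> v is a Sigma^+ transition outside
   the capability set of i at w, then u -> v is not an (f => g)-transition,
   so by the two lemmas above u |= f and v |= ~g. *)
Lemma uncapable_transition_pe (i : I) (w : W M) (f g : form) (A : prog)
  (u v : W M) :
  SigmaPlus A -> rel M A u v -> ~ cap M i w u v ->
  sat M (FCap i (PPE f g)) w -> sat M f u /\ ~ sat M g v.
Proof.
  intros HA Huv Hnc Hcap. rewrite (lm_cpe HM) in Hcap. split.
  - apply NNPP; intros Hf. apply Hnc, Hcap.
    exact (pe_rel_of_precondition_fails f g A u v HA Huv Hf).
  - intros Hg. apply Hnc, Hcap.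
    exact (pe_rel_of_effect_holds f g A u v HA Huv Hg).
Qed.

End LModelFacts.

Theorem mainTheorem12 (AtF AtP I : Type) (p0 : AtF)
  (M : struct AtF AtP I) (HM : LModel M) (w : W M)
  (Gamma : form AtF AtP I -> Prop)
  (Hsat : forall f, Gamma f -> sat M f w)
  (i : I) (A : prog AtF AtP I) (HA : inTSigma A)
  (HnegC : Gamma (FNeg (FCap i A)))
  (l : list (form AtF AtP I * form AtF AtP I)) (Hnd : NoDup l)
  (Hl : forall f g, Gamma (FCap i (PPE f g)) <-> In (f, g) l) :
  satisfiable (Delta p0 A l).
Proof.
  assert (Hn : ~ sat M (FCap i A) w) by (rewrite <- (lm_neg HM); auto).
  destruct (missing_transition HM i A w HA Hn) as [u [v [Huv Hnc]]].
  assert (Hpe : forall f g, In (f, g) l -> sat M f u /\ ~ sat M g v).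
  { intros f g Hin.
    apply (uncapable_transition_pe HM i w f g A u v (tsigma_sigmaplus A HA) Huv Hnc).
    apply Hsat, Hl, Hin. }
  exists M. split; [exact HM|]. exists u. intros d [Hd| ->].
  - apply in_map_iff in Hd. destruct Hd as [[f g] [<- Hin]].
    exact (proj1 (Hpe f g Hin)).
  - rewrite (lm_neg HM), (lm_box HM). intros Hbox.
    apply (chain_false HM p0 v l); [|exact (Hbox v Huv)].
    intros f g Hin. exact (proj2 (Hpe f g Hin)).
Qed.
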